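(* For every $n\ge1$ and every subset $A\subseteq\{-1,1\}^n$, $$\Big\|\sum_{x\in A}x\Big\|_2\le 2^{n-1},$$ and equality holds when $A=\{x\in\{-1,1\}^n: x_i=c\}$ for some fixed coordinate $i$ and fixed sign $c\in\{-1,1\}$. *)

From mathcomp Require Import all_boot all_order all_algebra.
From mathcomp Require Import reals.
Set Implicit Arguments. Unset Strict Implicit. Unset Printing Implicit Defensive.
Import Order.TTheory GRing.Theory Num.Theory.
Local Open Scope ring_scope.

(* A point of the discrete cube {-1,1}^n is encoded by b : {ffun 'I_n -> bool},
   with coordinate j equal to +1 if b j is true and -1 otherwise. *)
Definition sgn (R : pzRingType) (b : bool) : R := if b then 1 else -1.

Definition cube_pt (R : pzRingType) (n : nat) (x : {ffun 'I_n -> bool}) : 'rV[R]_n :=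
  \row_j sgn R (x j).

Definition norm2 (R : realType) (n : nat) (v : 'rV[R]_n) : R :=
  Num.sqrt (\sum_(j < n) v ord0 j ^+ 2).

Definition cube_sum (R : pzRingType) (n : nat) (A : {set {ffun 'I_n -> bool}}) : 'rV[R]_n :=
  \sum_(x in A) cube_pt R x.

From mathcomp Require Import all_boot all_order all_algebra.
From mathcomp Require Import reals ring lra.
Import Order.TTheory GRing.Theory Num.Theory.
Local Open Scope ring_scope.
Set Implicit Arguments. Unset Strict Implicit.

(* Write S for the sum of the points of A and N = 2^n.  Then
   |S|^2 = sum_(x in A) <x,S>; since sum_x <x,S> = 0 over the whole cube, this
   is at most half of sum_x |<x,S>|.  By Cauchy-Schwarz and Parseval
   (sum_x <x,S>^2 = N |S|^2) that is at most N |S| / 2, hence |S| <= N / 2. *)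

Lemma sqr_sum_le_card_sum_sqr (R : realFieldType) (I : finType) (a : I -> R) :
  (\sum_i a i) ^+ 2 <= #|I|%:R * \sum_i a i ^+ 2.
Proof.
set N : R := #|I|%:R; set T := \sum_i a i; set U := \sum_i a i ^+ 2.
have sum_dev_sqr : \sum_i (N * a i - T) ^+ 2 = N * (N * U - T ^+ 2).
  under eq_bigr => i _ do rewrite sqrrB exprMn mulr2n.
  rewrite !big_split /= !sumrN big_split /= -!mulr_sumr -!mulr_suml sumr_const.
  rewrite -/T -/U -mulr_natr cardE -cardT -/N -mulr_sumr -/T; ring.
have [/card0_eq I0 | I_gt0] := posnP #|I|.
  have -> : T = 0 by rewrite /T big_pred0 // => i; have := I0 i.
  by rewrite expr0n mulr_ge0 ?ler0n ?sumr_ge0 // => i _; exact: sqr_ge0.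
have : 0 <= N * (N * U - T ^+ 2).
  by rewrite -sum_dev_sqr; apply: sumr_ge0 => i _; exact: sqr_ge0.
by rewrite pmulr_rge0 ?ltr0n //; lra.
Qed.

Lemma sum_le_half_sum_norm (R : realFieldType) (I : finType) (t : I -> R)
    (A : {pred I}) :
  \sum_i t i = 0 -> \sum_(i in A) t i <= (\sum_i `|t i|) / 2.
Proof.
move=> sum_t0.
apply: (@le_trans _ _ (\sum_(i in A) (t i + `|t i|) / 2)).
  by apply: ler_sum => i _; have := ler_norm (t i); lra.
apply: (@le_trans _ _ (\sum_i (t i + `|t i|) / 2)).
  rewrite [X in _ <= X](bigID [in A]) /= lerDl.
  by apply: sumr_ge0 => i _; have := ler_norm (- t i); rewrite normrN; lra.
by rewrite -mulr_suml big_split /= sum_t0 add0r.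
Qed.

Lemma sgn_sqr (R : pzRingType) (b : bool) : sgn R b * sgn R b = 1.
Proof. by case: b; rewrite /sgn ?mulr1 ?mulrNN ?mulr1. Qed.

Lemma sgnN (R : pzRingType) (b : bool) : sgn R (~~ b) = - sgn R b.
Proof. by case: b; rewrite /sgn ?opprK. Qed.

Section Cube.

Variables (R : realFieldType) (n : nat).
Local Notation cube := {ffun 'I_n -> bool}.

Definition flip (j : 'I_n) (x : cube) : cube :=
  [ffun k => if k == j then ~~ x k else x k].

Lemma flipK j : involutive (flip j).
Proof.
by move=> x; apply/ffunP => k; rewrite !ffunE; case: eqP => // _; rewrite negbK.
Qed.

Lemma flip_at j x : flip j x j = ~~ x j.
Proof. by rewrite ffunE eqxx. Qed.

Lemma flip_neq j k x : k != j -> flip j x k = x k.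
Proof. by rewrite ffunE => /negbTE->. Qed.

Lemma sum_sgnM_flip_invariant j (f : cube -> R) :
  (forall x, f (flip j x) = f x) -> \sum_(x : cube) sgn R (x j) * f x = 0.
Proof.
move=> f_flip; set s := LHS.
suff : s = - s by lra.
rewrite {1}/s (reindex_inj (inv_inj (flipK j))) /= -sumrN; apply: eq_bigr => x _.
by rewrite f_flip flip_at sgnN mulNr.
Qed.

Lemma sum_sgnM j k :
  \sum_(x : cube) sgn R (x j) * sgn R (x k) = if j == k then #|cube|%:R else 0.
Proof.
case: eqVneq => [<- | neq_jk].
  by under eq_bigr => x _ do rewrite sgn_sqr; rewrite sumr_const cardE -cardT.
by apply: sum_sgnM_flip_invariant => x; rewrite flip_neq // eq_sym.
Qed.

Definition cube_dot (x : cube) (v : 'I_n -> R) : R := \sum_j sgn R (x j) * v j.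

Lemma sum_cube_dot v : \sum_x cube_dot x v = 0.
Proof.
rewrite exchange_big big1 //= => j _; rewrite -mulr_suml.
under eq_bigr => x _ do rewrite -[sgn R _]mulr1.
by rewrite sum_sgnM_flip_invariant ?mul0r.
Qed.

Lemma sum_cube_dot_sqr v :
  \sum_x cube_dot x v ^+ 2 = #|cube|%:R * \sum_j v j ^+ 2.
Proof.
under eq_bigr => x _ do rewrite expr2 big_distrlr.
rewrite exchange_big mulr_sumr; apply: eq_bigr => j _ /=; rewrite exchange_big /=.
transitivity (\sum_k (if j == k then #|cube|%:R else 0) * (v j * v k)).
  apply: eq_bigr => k _; rewrite -sum_sgnM mulr_suml.
  by apply: eq_bigr => x _; rewrite mulrACA.
rewrite (bigD1 j) //= eqxx big1 ?addr0 ?expr2 // => k neq_kj.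
by rewrite eq_sym (negbTE neq_kj) mul0r.
Qed.

Lemma cube_sumE (A : {set cube}) j :
  cube_sum R A ord0 j = \sum_(x in A) sgn R (x j).
Proof. by rewrite /cube_sum summxE; apply: eq_bigr => x _; rewrite mxE. Qed.

Lemma sum_sqr_cube_sum (A : {set cube}) :
  \sum_j cube_sum R A ord0 j ^+ 2 = \sum_(x in A) cube_dot x (cube_sum R A ord0).
Proof.
rewrite exchange_big; apply: eq_bigr => j _ /=.
by rewrite expr2 {1}cube_sumE mulr_suml.
Qed.

Lemma sum_sqr_cube_sum_le (A : {set cube}) :
  \sum_j cube_sum R A ord0 j ^+ 2 <= (#|cube|%:R / 2) ^+ 2.
Proof.
set v := cube_sum R A ord0; set Q := \sum_j v j ^+ 2; set N : R := #|cube|%:R.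
set T := \sum_x `|cube_dot x v|.
have Q_ge0 : 0 <= Q by apply: sumr_ge0 => j _; exact: sqr_ge0.
have Q_le_T : Q <= T / 2.
  by rewrite /Q sum_sqr_cube_sum sum_le_half_sum_norm // sum_cube_dot.
have T_le : T ^+ 2 <= N * (N * Q).
  rewrite -sum_cube_dot_sqr.
  suff -> : \sum_x cube_dot x v ^+ 2 = \sum_x `|cube_dot x v| ^+ 2.
    exact: sqr_sum_le_card_sum_sqr.
  by apply: eq_bigr => x _; rewrite real_normK ?num_real.
nra.
Qed.

Lemma card_coord_eq i c : (#|[set x : cube | x i == c]| * 2 = #|cube|)%N.
Proof.
set S := [set x : cube | x i == c].
have compl_S : ~: S = flip i @: S.
  apply/setP => x; rewrite -{2}(flipK i x) mem_imset; last exact: inv_inj (flipK i).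
  by rewrite !inE flip_at; case: (x i); case: (c).
by rewrite -(cardsC S) compl_S card_imset ?muln2 ?addnn //; exact: inv_inj (flipK i).
Qed.

Lemma sum_sqr_cube_sum_coord_eq i c :
  \sum_j cube_sum R [set x : cube | x i == c] ord0 j ^+ 2 = (#|cube|%:R / 2) ^+ 2.
Proof.
set S := [set x : cube | x i == c].
have sumS j : cube_sum R S ord0 j = \sum_(x : cube) sgn R (x j) * (x i == c)%:R.
  rewrite cube_sumE big_mkcond /=; apply: eq_bigr => x _; rewrite inE.
  by case: (x i == c); rewrite ?mulr1 ?mulr0.
rewrite (bigD1 i) //= big1 ?addr0 => [|j neq_ji]; last first.
  by rewrite sumS sum_sgnM_flip_invariant ?expr0n // => x; rewrite flip_neq // eq_sym.
rewrite cube_sumE.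
have -> : \sum_(x in S) sgn R (x i) = sgn R c * #|S|%:R.
  by rewrite -sumr_const mulr_sumr; apply: eq_bigr => x; rewrite inE => /eqP->; rewrite mulr1.
rewrite -(card_coord_eq i c) natrM mulfK ?pnatr_eq0 //.
by rewrite exprMn expr2 sgn_sqr mul1r.
Qed.

End Cube.

Theorem theorem5 (R : realType) (n : nat) (hn : (1 <= n)%N) :
  (forall A : {set {ffun 'I_n -> bool}},
      norm2 (cube_sum R A) <= 2 ^+ n.-1) /\
  (forall (i : 'I_n) (c : bool),
      norm2 (cube_sum R [set x : {ffun 'I_n -> bool} | x i == c]) = 2 ^+ n.-1).
Proof.
have half_card : #|{ffun 'I_n -> bool}|%:R / 2 = 2 ^+ n.-1 :> R.
  by rewrite card_ffun card_ord card_bool natrX -{1}(prednK hn) exprSr mulfK ?pnatr_eq0.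
have half_card_ge0 : 0 <= 2 ^+ n.-1 :> R by exact: exprn_ge0.
split => [A | i c]; rewrite /norm2.
  rewrite -(ger0_norm half_card_ge0) -sqrtr_sqr ler_sqrt ?sqr_ge0 // -half_card.
  exact: sum_sqr_cube_sum_le.
by rewrite sum_sqr_cube_sum_coord_eq half_card sqrtr_sqr ger0_norm.
Qed.
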